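(* Let $\gamma\in[0,1)$ and $\Omega_{\gamma}=\{z\in\mathbb{C}:|z+\frac{\gamma}{1-\gamma}|<\frac{1}{1-\gamma}\}$. Let $f$ be analytic in $\Omega_\gamma$ with $|f(z)|\le1$ on $\Omega_\gamma$ and $f(z)=\sum_{n=0}^\infty a_n\left(z+\frac{\gamma}{1-\gamma}\right)^n$ in $\Omega_\gamma$. Then $$\sum_{n=0}^\infty \frac{|a_n|}{(1-\gamma)^n}\rho^n+\left(\frac{1}{1+|a_0|}+\frac{\rho}{1-\rho}\right)\sum_{n=1}^\infty\frac{|a_n|^2}{(1-\gamma)^{2n}}\rho^{2n}\le 1$$ for $|(1-\gamma)z+\gamma|=\rho\le\rho_0=1/3$. The number $\rho_0=1/3$ is best possible, i.e. for every $\rho\in(1/3,1)$ there is such a function $f$ for which the left-hand side exceeds $1$.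
   Context: $\Omega_\gamma$ is the open disk centered at $-\gamma/(1-\gamma)$ of radius $1/(1-\gamma)$. *)

From Stdlib Require Import Reals.
From Coquelicot Require Export Coquelicot.
Open Scope R_scope.

Definition cen (g : R) : C := RtoC (- (g / (1 - g))).
Definition rad (g : R) : R := 1 / (1 - g).
Definition Omega (g : R) (z : C) : Prop := Cmod (z - cen g)%C < rad g.

Definition admissible (g : R) (f : C -> C) (a : nat -> C) : Prop :=
  (forall z, Omega g z -> is_series (fun n => (a n * pow_n (z - cen g) n)%C) (f z))
  /\ (forall z, Omega g z -> Cmod (f z) <= 1).

Definition lhs_is (g rho : R) (a : nat -> C) (L : R) : Prop :=
  exists S1 S2 : R,
    is_series (fun n => Cmod (a n) / (1 - g) ^ n * rho ^ n) S1 /\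
    is_series (fun n => Cmod (a (S n)) ^ 2 / (1 - g) ^ (2 * S n) * rho ^ (2 * S n)) S2 /\
    L = S1 + (1 / (1 + Cmod (a O)) + rho / (1 - rho)) * S2.

From Stdlib Require Import Reals Lra Lia Psatz.
From Coquelicot Require Import Coquelicot.
Open Scope R_scope.

(* Translating by [cen g] turns [f] into a power series [sum a_n z^n] bounded by 1 on the disc
   of radius [R = 1 / (1 - g)], and [|a_n| / (1 - g)^n = |a_n| R^n].  The key estimate is
   Wiener's inequality [|a_n| R^n <= 1 - |a_0|^2] for [n >= 1].  Sample [P(z) (1 + s z^n)], with
   [P] a long partial sum, at [K] equally spaced points of the circle [|z| = r < R]: by the
   discrete Parseval identity its Fourier coefficients of index [0] and [n] give
   [|a_0|^2 + |a_n + s a_0|^2 r^(2n) <= 1 + |s|^2 r^(2n)], and [s = a_n conj(a_0) / (1 - |a_0|^2)]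
   yields Wiener's bound at radius [r], hence at [R].  Both series on the left are then dominated
   by geometric series, and what remains is an inequality in [A = |a_0|] and [rho], true for
   [rho <= 1/3].  For [rho > 1/3], the disc automorphism [w |-> (al - w) / (1 - al w)] evaluated
   at [w = (1 - g) (z - cen g)] has first sum [al + (1 - al^2) rho / (1 - al rho)], which exceeds
   [1] as soon as [rho (1 + 2 al) > 1]. *)

Fixpoint csum (f : nat -> C) (n : nat) : C :=
  match n with O => RtoC 0 | S k => Cplus (csum f k) (f k) end.
Fixpoint rsum (f : nat -> R) (n : nat) : R :=
  match n with O => 0 | S k => rsum f k + f k end.

Lemma csum_ext f g n : (forall i, (i < n)%nat -> f i = g i) -> csum f n = csum g n.
Proof. induction n as [|n IH]; intros H; cbn [csum]; auto. rewrite IH, H; auto. Qed.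

Lemma rsum_ext f g n : (forall i, (i < n)%nat -> f i = g i) -> rsum f n = rsum g n.
Proof. induction n as [|n IH]; intros H; cbn [rsum]; auto. rewrite IH, H; auto. Qed.

Lemma rsum_le f g n : (forall i, (i < n)%nat -> f i <= g i) -> rsum f n <= rsum g n.
Proof.
induction n as [|n IH]; intros H; cbn [rsum]; [lra|].
assert (f n <= g n) by auto. assert (rsum f n <= rsum g n) by auto. lra.
Qed.

Lemma rsum_nonneg f n : (forall i, (i < n)%nat -> 0 <= f i) -> 0 <= rsum f n.
Proof.
induction n as [|n IH]; intros H; cbn [rsum]; [lra|].
assert (0 <= f n) by auto. assert (0 <= rsum f n) by auto. lra.
Qed.

Lemma rsum_le_length f m n :
  (forall i, (i < n)%nat -> 0 <= f i) -> (m <= n)%nat -> rsum f m <= rsum f n.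
Proof.
intros Hf Hmn. induction Hmn as [|n Hmn IH]; [lra|]. cbn [rsum].
assert (0 <= f n) by auto. assert (rsum f m <= rsum f n) by auto. lra.
Qed.

Lemma rsum_term_le f n i : (forall j, (j < n)%nat -> 0 <= f j) -> (i < n)%nat -> f i <= rsum f n.
Proof.
intros Hf Hi. apply Rle_trans with (rsum f (S i)); [|apply rsum_le_length; auto].
cbn [rsum]. assert (0 <= rsum f i) by (apply rsum_nonneg; intros; apply Hf; lia). lra.
Qed.

Lemma rsum_two_terms_le f n K :
  (forall j, (j < K)%nat -> 0 <= f j) -> (0 < n < K)%nat -> f O + f n <= rsum f K.
Proof.
intros Hf Hn. apply Rle_trans with (rsum f (S n)); [|apply rsum_le_length; auto; lia].
cbn [rsum]. assert (f O <= rsum f n) by (apply rsum_term_le; [intros; apply Hf|]; lia). lra.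
Qed.

Lemma csum_plus f g n : csum (fun i => f i + g i)%C n = (csum f n + csum g n)%C.
Proof. induction n as [|n IH]; cbn [csum]; [ring|]. rewrite IH; ring. Qed.

Lemma csum_scal c f n : csum (fun i => c * f i)%C n = (c * csum f n)%C.
Proof. induction n as [|n IH]; cbn [csum]; [ring|]. rewrite IH; ring. Qed.

Lemma rsum_scal c f n : rsum (fun i => c * f i) n = c * rsum f n.
Proof. induction n as [|n IH]; cbn [rsum]; [ring|]. rewrite IH; ring. Qed.

Lemma csum_conj f n : Cconj (csum f n) = csum (fun i => Cconj (f i)) n.
Proof.
induction n as [|n IH]; cbn [csum].
- apply injective_projections; simpl; ring.
- rewrite Cplus_conj, IH; auto.
Qed.

Lemma csum_const c n : csum (fun _ => c) n = (INR n * c)%C.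
Proof.
induction n as [|n IH]; cbn [csum].
- apply injective_projections; simpl; ring.
- rewrite IH, S_INR, RtoC_plus. ring.
Qed.

Lemma csum_RtoC f n : csum (fun i => RtoC (f i)) n = RtoC (rsum f n).
Proof. induction n as [|n IH]; cbn [csum rsum]; auto. rewrite IH, RtoC_plus; auto. Qed.

Lemma csum_swap (f : nat -> nat -> C) n m :
  csum (fun j => csum (fun i => f i j) m) n = csum (fun i => csum (fun j => f i j) n) m.
Proof.
induction n as [|n IH]; cbn [csum].
- induction m as [|m IHm]; cbn [csum]; auto. rewrite <- IHm; ring.
- rewrite IH, <- csum_plus. auto.
Qed.

Lemma csum_add_length f n m : csum f (n + m) = (csum f n + csum (fun i => f (n + i)%nat) m)%C.
Proof.
induction m as [|m IH]; cbn [csum].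
- rewrite Nat.add_0_r; ring.
- rewrite Nat.add_succ_r; cbn [csum]. rewrite IH; ring.
Qed.

Lemma csum_eq0 (f : nat -> C) n : (forall i, (i < n)%nat -> f i = 0%C) -> csum f n = 0%C.
Proof. induction n as [|n IH]; intros H; cbn [csum]; auto. rewrite IH, H; auto. ring. Qed.

Lemma csum_pad (f : nat -> C) n K :
  (n <= K)%nat -> (forall i, (n <= i < K)%nat -> f i = 0%C) -> csum f K = csum f n.
Proof.
intros HnK Hf. replace K with (n + (K - n))%nat by lia.
rewrite csum_add_length, (csum_eq0 (fun i => f (n + i)%nat)); [ring|].
intros i Hi. apply Hf. lia.
Qed.

Lemma csum_single (f : nat -> C) n k :
  (k < n)%nat -> (forall i, (i < n)%nat -> i <> k -> f i = 0%C) -> csum f n = f k.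
Proof.
induction n as [|n IH]; intros Hk H; [lia|]. cbn [csum]. destruct (Nat.eq_dec k n) as [->|Hne].
- rewrite csum_eq0; [ring|]. intros; apply H; lia.
- rewrite IH, (H n); try lia; [ring|]. intros; apply H; lia.
Qed.

Lemma Cmod_csum_le f n : Cmod (csum f n) <= rsum (fun i => Cmod (f i)) n.
Proof.
induction n as [|n IH]; cbn [csum rsum]; [rewrite Cmod_0; lra|].
eapply Rle_trans; [apply Cmod_triangle|]. lra.
Qed.

Lemma sum_n_csum (a : nat -> C) N : sum_n a N = csum a (S N).
Proof.
induction N as [|N IH].
- rewrite sum_O. change (a 0%nat = (RtoC 0 + a 0%nat)%C). ring.
- rewrite sum_Sn, IH. reflexivity.
Qed.

Lemma csum_geom w n : (csum (fun j => Cpow w j) n * (w - 1))%C = (Cpow w n - 1)%C.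
Proof.
induction n as [|n IH]; cbn [csum Cpow]; [ring|].
rewrite Cmult_plus_distr_r, IH. ring.
Qed.

Lemma rsum_geom q k : rsum (fun i => q ^ i) k * (1 - q) = 1 - q ^ k.
Proof.
induction k as [|k IH]; cbn [rsum]; [simpl; ring|].
rewrite Rmult_plus_distr_r, IH. simpl; ring.
Qed.

Definition cis (x : R) : C := (cos x, sin x).

Lemma cis_add x y : cis (x + y) = (cis x * cis y)%C.
Proof.
unfold cis, Cmult. rewrite cos_plus, sin_plus.
apply injective_projections; simpl; ring.
Qed.

Lemma cis_0 : cis 0 = 1%C.
Proof. unfold cis. rewrite cos_0, sin_0. reflexivity. Qed.

Lemma cis_pow x n : Cpow (cis x) n = cis (INR n * x).
Proof.
induction n as [|n IH]; cbn [Cpow].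
- rewrite Rmult_0_l, cis_0. auto.
- rewrite IH, <- cis_add, S_INR. f_equal. ring.
Qed.

Lemma cis_conj x : Cconj (cis x) = cis (- x).
Proof. unfold cis, Cconj. simpl. rewrite cos_neg, sin_neg. auto. Qed.

Lemma Cmod_cis x : Cmod (cis x) = 1.
Proof.
unfold Cmod, cis; simpl fst; simpl snd. rewrite <- sqrt_1. f_equal.
pose proof (sin2_cos2 x) as H. unfold Rsqr in H. simpl. lra.
Qed.

Lemma cis_2PI_mult k : cis (2 * PI * INR k) = 1%C.
Proof.
unfold cis. replace (2 * PI * INR k) with (0 + 2 * INR k * PI) by ring.
rewrite cos_period, sin_period, cos_0, sin_0. auto.
Qed.

Lemma cis_neq1 x : 0 < x < 2 * PI -> cis x <> 1%C.
Proof.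
intros Hx E. unfold cis in E. injection E. intros Hs Hc.
destruct (Rtotal_order x PI) as [H|[H|H]].
- pose proof (sin_gt_0 x). lra.
- subst. rewrite cos_PI in Hc. lra.
- pose proof (sin_lt_0 x). lra.
Qed.

Definition uroot (K m j : nat) : C := cis (2 * PI * INR m * INR j / INR K).

Lemma uroot_mul K m p j : (uroot K m j * uroot K p j)%C = uroot K (m + p) j.
Proof. unfold uroot. rewrite <- cis_add, plus_INR. f_equal. unfold Rdiv; ring. Qed.

Lemma uroot_conj_mul K l i j :
  (l <= i)%nat -> (Cconj (uroot K l j) * uroot K i j)%C = uroot K (i - l) j.
Proof.
intros H. unfold uroot. rewrite cis_conj, <- cis_add, minus_INR by auto.
f_equal. unfold Rdiv; ring.
Qed.

Lemma uroot_0 K j : uroot K 0 j = 1%C.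
Proof.
unfold uroot. replace (2 * PI * INR 0 * INR j / INR K) with 0 by (simpl; unfold Rdiv; ring).
apply cis_0.
Qed.

Lemma Cmod_uroot K m j : Cmod (uroot K m j) = 1.
Proof. apply Cmod_cis. Qed.

Lemma uroot_conj_mul_self K m j : (Cconj (uroot K m j) * uroot K m j)%C = 1%C.
Proof. rewrite uroot_conj_mul, Nat.sub_diag by lia. apply uroot_0. Qed.

Lemma Cpow_r_uroot K r i j : Cpow (RtoC r * uroot K 1 j)%C i = (RtoC (r ^ i) * uroot K i j)%C.
Proof.
rewrite Cpow_mult_l, <- RtoC_pow. f_equal.
unfold uroot. rewrite cis_pow. f_equal. simpl INR. unfold Rdiv; ring.
Qed.

Lemma uroot_sum_eq0 K m : (1 <= m < K)%nat -> csum (uroot K m) K = 0%C.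
Proof.
intros Hm. set (th := 2 * PI * INR m / INR K).
assert (HK : 0 < INR K) by (apply lt_0_INR; lia).
assert (Hm0 : 0 < INR m) by (apply lt_0_INR; lia).
assert (HmK : INR m < INR K) by (apply lt_INR; lia).
assert (Hth : 0 < th < 2 * PI).
{ unfold th. pose proof PI_RGT_0. split.
  - apply Rdiv_lt_0_compat; nra.
  - apply Rmult_lt_reg_r with (INR K); auto. field_simplify; nra. }
assert (Hgeom : csum (uroot K m) K = csum (fun j => Cpow (cis th) j) K).
{ apply csum_ext. intros. rewrite cis_pow. unfold uroot, th. f_equal. field. lra. }
assert (Hfull : Cpow (cis th) K = 1%C).
{ rewrite cis_pow. replace (INR K * th) with (2 * PI * INR m) by (unfold th; field; lra).
  apply cis_2PI_mult. }
assert (Hne : (cis th - 1)%C <> 0%C).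
{ intro Z. apply (cis_neq1 th Hth). replace (cis th) with ((cis th - 1) + 1)%C by ring.
  rewrite Z. ring. }
pose proof (csum_geom (cis th) K) as G. rewrite Hfull in G.
rewrite Hgeom.
replace (csum _ K) with (csum (fun j => Cpow (cis th) j) K * (cis th - 1) / (cis th - 1))%C
  by (field; auto).
rewrite G. field. auto.
Qed.

Lemma uroot_orthogonal K i l : (i < K)%nat -> (l < K)%nat ->
  csum (fun j => Cconj (uroot K l j) * uroot K i j)%C K
  = if Nat.eqb i l then RtoC (INR K) else 0%C.
Proof.
intros Hi Hl. destruct (Nat.eqb_spec i l) as [<-|Hne].
- rewrite (csum_ext _ (fun _ => 1%C)), csum_const; [ring|].
  intros. apply uroot_conj_mul_self.
- destruct (Nat.lt_ge_cases l i).
  + rewrite (csum_ext _ (uroot K (i - l))); [apply uroot_sum_eq0; lia|].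
    intros. apply uroot_conj_mul. lia.
  + rewrite (csum_ext _ (fun j => Cconj (uroot K (l - i) j))).
    * rewrite <- csum_conj, uroot_sum_eq0 by lia.
      apply injective_projections; simpl; ring.
    * intros. rewrite <- uroot_conj_mul by lia. rewrite Cmult_conj, Cconj_conj. ring.
Qed.

Lemma dft_coef K N l (d : nat -> C) : (l < N)%nat -> (N <= K)%nat ->
  csum (fun j => Cconj (uroot K l j) * csum (fun i => d i * uroot K i j) N)%C K
  = (INR K * d l)%C.
Proof.
intros HlN HNK.
rewrite (csum_ext _ (fun j => csum (fun i => d i * (Cconj (uroot K l j) * uroot K i j)) N)%C).
2:{ intros j _. rewrite <- csum_scal. apply csum_ext. intros. ring. }
rewrite csum_swap.
rewrite (csum_ext _ (fun i => d i * if Nat.eqb i l then RtoC (INR K) else 0%C))%C.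
2:{ intros i Hi. rewrite csum_scal, uroot_orthogonal by lia. auto. }
rewrite (csum_single _ N l HlN).
- rewrite Nat.eqb_refl. ring.
- intros i _ Hil. apply Nat.eqb_neq in Hil. rewrite Hil. ring.
Qed.

Lemma dft_parseval K N (d : nat -> C) : (N <= K)%nat ->
  rsum (fun j => Cmod (csum (fun i => d i * uroot K i j) N)%C ^ 2) K
  = INR K * rsum (fun i => Cmod (d i) ^ 2) N.
Proof.
intros HNK. set (X j := csum (fun i => d i * uroot K i j)%C N).
apply RtoC_inj. rewrite RtoC_mult, <- !csum_RtoC.
rewrite (csum_ext (fun j => RtoC (Cmod (X j) ^ 2))
           (fun j => csum (fun i => Cconj (d i) * (Cconj (uroot K i j) * X j)) N))%C.
2:{ intros j _.
    assert (HX : Cconj (X j) = csum (fun i => Cconj (d i) * Cconj (uroot K i j))%C N)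
      by (unfold X; rewrite csum_conj; apply csum_ext; intros; apply Cmult_conj).
    rewrite Cmod2_conj, HX, <- csum_scal. apply csum_ext. intros. ring. }
rewrite csum_swap, <- csum_scal. apply csum_ext. intros i Hi.
rewrite csum_scal. unfold X. rewrite dft_coef, Cmod2_conj by lia. ring.
Qed.

Lemma uroot_mul_csum K n N (d : nat -> C) j :
  (uroot K n j * csum (fun i => d i * uroot K i j) N)%C
  = csum (fun i => (if (i <? n)%nat then 0 else d (i - n)%nat) * uroot K i j)%C (n + N).
Proof.
rewrite csum_add_length, (csum_eq0 _ n), Cplus_0_l.
- rewrite <- csum_scal. apply csum_ext. intros i _.
  replace (n + i <? n)%nat with false by (symmetry; apply Nat.ltb_ge; lia).
  replace (n + i - n)%nat with i by lia. rewrite <- uroot_mul. ring.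
- intros i Hi. replace (i <? n)%nat with true by (symmetry; apply Nat.ltb_lt; lia). ring.
Qed.

Lemma csum_uroot_mul_1_plus (d : nat -> C) (t : C) (n N j : nat) :
  (csum (fun i => d i * uroot (n + N) i j) N * (1 + t * uroot (n + N) n j))%C
  = csum (fun i => ((if (i <? N)%nat then d i else 0)
                    + t * (if (i <? n)%nat then 0 else d (i - n)%nat)) * uroot (n + N) i j)%C
         (n + N).
Proof.
set (K := (n + N)%nat).
assert (Hpad : csum (fun i => (if (i <? N)%nat then d i else 0) * uroot K i j)%C K
               = csum (fun i => d i * uroot K i j)%C N).
{ rewrite (csum_pad _ N K); [|unfold K; lia|].
  - apply csum_ext. intros i Hi.
    replace (i <? N)%nat with true by (symmetry; apply Nat.ltb_lt; lia). reflexivity.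
  - intros i Hi. replace (i <? N)%nat with false by (symmetry; apply Nat.ltb_ge; lia). ring. }
transitivity (csum (fun i => d i * uroot K i j) N
              + t * (uroot K n j * csum (fun i => d i * uroot K i j) N))%C; [ring|].
rewrite uroot_mul_csum. fold K. rewrite <- Hpad, <- csum_scal, <- csum_plus.
apply csum_ext. intros. ring.
Qed.

Lemma rsum_Cmod_1_plus_uroot K n t : (1 <= n < K)%nat ->
  rsum (fun j => Cmod (1 + t * uroot K n j)%C ^ 2) K = INR K * (1 + Cmod t ^ 2).
Proof.
intros Hn. apply RtoC_inj. rewrite <- csum_RtoC.
rewrite (csum_ext _ (fun j => 1 + t * uroot K n j + Cconj (t * uroot K n j)
                               + (t * Cconj t) * (Cconj (uroot K n j) * uroot K n j)))%C.
2:{ intros j _. rewrite Cmod2_conj, Cplus_conj, Cmult_conj.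
    replace (Cconj (RtoC 1)) with (RtoC 1) by (apply injective_projections; simpl; ring). ring. }
rewrite !csum_plus, <- csum_conj, csum_scal, csum_scal, uroot_sum_eq0 by lia.
rewrite (csum_ext (fun j => Cconj (uroot K n j) * uroot K n j)%C (fun _ => RtoC 1))
  by (intros; apply uroot_conj_mul_self).
rewrite csum_const, <- Cmod2_conj, RtoC_mult, RtoC_plus.
replace (Cconj (t * 0)) with (RtoC 0) by (apply injective_projections; simpl; ring). ring.
Qed.

Lemma Cmod_mul_pow_sqr (x : C) (r : R) (n : nat) : 0 <= r ->
  Cmod (x * RtoC (r ^ n))%C ^ 2 = Cmod x ^ 2 * r ^ (2 * n).
Proof.
intros Hr. rewrite Cmod_mult, Cmod_R, Rabs_pos_eq by (apply pow_le; lra).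
rewrite (Nat.mul_comm 2 n), pow_mult. ring.
Qed.

(* Parseval for the samples of [P(z) (1 + s z^n)] on the circle [|z| = r], keeping only the
   Fourier coefficients of index [0] and [n]. *)
Lemma sampled_coef_bound (c : nat -> C) (r : R) (s : C) (n M : nat) (eps : R) :
  (1 <= n <= M)%nat -> 0 < r ->
  (forall j, Cmod (csum (fun i => c i * Cpow (RtoC r * uroot (n + S M) 1 j) i)%C (S M))
             <= 1 + eps) ->
  Cmod (c O) ^ 2 + Cmod (c n + s * c O)%C ^ 2 * r ^ (2 * n)
  <= (1 + eps) ^ 2 * (1 + Cmod s ^ 2 * r ^ (2 * n)).
Proof.
intros Hn Hr HP. set (K := (n + S M)%nat).
assert (HK : 0 < INR K) by (apply lt_0_INR; unfold K; lia).
set (P j := csum (fun i => c i * Cpow (RtoC r * uroot K 1 j) i)%C (S M)).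
set (t := (s * RtoC (r ^ n))%C).
set (d i := (c i * RtoC (r ^ i))%C).
set (h i := ((if (i <? S M)%nat then d i else 0)
              + t * (if (i <? n)%nat then 0 else d (i - n)%nat))%C).
assert (HPh : forall j, (P j * (1 + t * uroot K n j))%C = csum (fun i => h i * uroot K i j)%C K).
{ intro j. transitivity (csum (fun i => d i * uroot K i j) (S M) * (1 + t * uroot K n j))%C.
  - f_equal. apply csum_ext. intros i Hi. unfold d. rewrite Cpow_r_uroot. ring.
  - apply csum_uroot_mul_1_plus. }
assert (Hh0 : h O = c O).
{ unfold h, d. replace (0 <? n)%nat with true by (symmetry; apply Nat.ltb_lt; lia).
  replace (0 <? S M)%nat with true by (symmetry; apply Nat.ltb_lt; lia). simpl. ring. }
assert (Hhn : Cmod (h n) ^ 2 = Cmod (c n + s * c O)%C ^ 2 * r ^ (2 * n)).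
{ assert (E : h n = ((c n + s * c O) * RtoC (r ^ n))%C).
  { unfold h, d, t. rewrite Nat.ltb_irrefl, Nat.sub_diag.
    replace (n <? S M)%nat with true by (symmetry; apply Nat.ltb_lt; lia). simpl. ring. }
  rewrite E. apply Cmod_mul_pow_sqr. lra. }
assert (Ht : Cmod t ^ 2 = Cmod s ^ 2 * r ^ (2 * n)) by (apply Cmod_mul_pow_sqr; lra).
assert (Hlow : INR K * (Cmod (h O) ^ 2 + Cmod (h n) ^ 2)
               <= rsum (fun j => Cmod (P j * (1 + t * uroot K n j))%C ^ 2) K).
{ rewrite (rsum_ext _ _ K (fun j _ => f_equal (fun x => Cmod x ^ 2) (HPh j))).
  rewrite dft_parseval by lia. apply Rmult_le_compat_l; [lra|].
  apply (rsum_two_terms_le (fun i => Cmod (h i) ^ 2)); [intros; apply pow2_ge_0|unfold K; lia]. }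
assert (Hup : rsum (fun j => Cmod (P j * (1 + t * uroot K n j))%C ^ 2) K
              <= (1 + eps) ^ 2 * (INR K * (1 + Cmod t ^ 2))).
{ rewrite <- (rsum_Cmod_1_plus_uroot K n t) by (unfold K; lia). rewrite <- rsum_scal.
  apply rsum_le. intros j _. rewrite Cmod_mult, Rpow_mult_distr.
  apply Rmult_le_compat_r; [apply pow2_ge_0|].
  pose proof (Cmod_ge_0 (P j)). apply pow_incr. split; [lra|apply HP]. }
rewrite Hh0, Hhn, Ht in *.
apply Rmult_le_reg_l with (INR K); [lra|]. nra.
Qed.

Lemma is_series_csum_near (a : nat -> C) (l : C) (eps : R) : is_series a l -> 0 < eps ->
  exists N, forall k, (N <= k)%nat -> Cmod (csum a (S k) - l) < eps.
Proof.
intros H He. apply filterlim_locally_ball_norm with (eps := mkposreal eps He) in H.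
destruct H as [N HN]. exists N. intros k Hk. rewrite <- sum_n_csum. exact (HN k Hk).
Qed.

Lemma is_series_terms_bounded (a : nat -> C) (l : C) : is_series a l ->
  exists B, 0 < B /\ forall k, Cmod (a k) <= B.
Proof.
intros H. destruct (is_series_csum_near a l (1 / 2) H) as [N HN]; [lra|].
exists (1 + rsum (fun i => Cmod (a i)) (S N)).
assert (Hnn : 0 <= rsum (fun i => Cmod (a i)) (S N))
  by (apply rsum_nonneg; intros; apply Cmod_ge_0).
split; [lra|]. intro k.
destruct (Nat.lt_ge_cases k (S N)) as [Hk|Hk].
- pose proof (rsum_term_le (fun i => Cmod (a i)) (S N) k (fun j _ => Cmod_ge_0 (a j)) Hk). lra.
- destruct k as [|k]; [lia|].
  replace (a (S k)) with ((csum a (S (S k)) - l) - (csum a (S k) - l))%C by (cbn [csum]; ring).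
  eapply Rle_trans; [apply Cmod_triangle|]. rewrite Cmod_opp.
  pose proof (HN (S k) ltac:(lia)). pose proof (HN k ltac:(lia)). lra.
Qed.

Lemma is_series_tail_le (a : nat -> C) (l : C) (N : nat) (T : R) : is_series a l ->
  (forall k, Cmod (csum a (N + k) - csum a N) <= T) -> Cmod (l - csum a N) <= T.
Proof.
intros H HT. destruct (Rle_or_lt (Cmod (l - csum a N)) T) as [|Hlt]; auto. exfalso.
destruct (is_series_csum_near a l (Cmod (l - csum a N) - T) H) as [N1 HN1]; [lra|].
specialize (HN1 (N + N1)%nat ltac:(lia)). specialize (HT (S N1)).
rewrite <- Nat.add_succ_r in HN1.
assert (Cmod (l - csum a N)
        <= Cmod (csum a (N + S N1) - l) + Cmod (csum a (N + S N1) - csum a N)).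
{ replace (l - csum a N)%C with (- (csum a (N + S N1) - l) + (csum a (N + S N1) - csum a N))%C
    by ring.
  eapply Rle_trans; [apply Cmod_triangle|]. rewrite Cmod_opp. lra. }
lra.
Qed.

Lemma csum_tail_geom_le (a : nat -> C) (B q : R) (N k : nat) : 0 <= q < 1 ->
  (forall i, Cmod (a i) <= B * q ^ i) -> Cmod (csum a (N + k) - csum a N) <= B * q ^ N / (1 - q).
Proof.
intros Hq Ha.
assert (HB : 0 <= B) by (pose proof (Ha O) as H0; pose proof (Cmod_ge_0 (a O)); simpl in H0; lra).
rewrite csum_add_length.
replace (csum a N + csum (fun i => a (N + i)%nat) k - csum a N)%C
  with (csum (fun i => a (N + i)%nat) k) by ring.
eapply Rle_trans; [apply Cmod_csum_le|].
eapply Rle_trans.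
{ apply (rsum_le _ (fun i => B * q ^ N * q ^ i)). intros i _.
  rewrite Rmult_assoc, <- pow_add. apply Ha. }
rewrite rsum_scal.
assert (Hg : rsum (fun i => q ^ i) k <= 1 / (1 - q)).
{ apply Rmult_le_reg_r with (1 - q); [lra|]. rewrite rsum_geom.
  replace (1 / (1 - q) * (1 - q)) with 1 by (field; lra).
  pose proof (pow_le q k ltac:(lra)). lra. }
pose proof (pow_le q N ltac:(lra)).
apply Rle_trans with (B * q ^ N * (1 / (1 - q))).
{ apply Rmult_le_compat_l; [apply Rmult_le_pos; lra|exact Hg]. }
right. field. lra.
Qed.

Lemma power_series_unif_cv (R0 : R) (c : nat -> C) (F : C -> C) :
  (forall z, Cmod z < R0 -> is_series (fun i => c i * Cpow z i)%C (F z)) ->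
  forall r, 0 < r < R0 -> forall eps, 0 < eps ->
  exists N0, forall N, (N0 <= N)%nat -> forall z, Cmod z <= r ->
  Cmod (F z - csum (fun i => c i * Cpow z i)%C N) <= eps.
Proof.
intros Hser r Hr eps He.
set (r' := (r + R0) / 2). set (q := r / r').
assert (Hq : 0 < q < 1).
{ unfold q, r'. split; [apply Rdiv_lt_0_compat; lra|].
  apply Rmult_lt_reg_r with ((r + R0) / 2); [lra|].
  field_simplify; lra. }
assert (Hr' : Cmod (RtoC r') < R0) by (rewrite Cmod_R, Rabs_pos_eq; unfold r'; lra).
destruct (is_series_terms_bounded _ _ (Hser _ Hr')) as [B [HB0 HB]].
assert (Hterm : forall z i, Cmod z <= r -> Cmod (c i * Cpow z i)%C <= B * q ^ i).
{ intros z i Hz. specialize (HB i).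
  rewrite Cmod_mult, Cmod_pow, Cmod_R, Rabs_pos_eq in HB by (unfold r'; lra).
  rewrite Cmod_mult, Cmod_pow.
  assert (Hzi : Cmod z ^ i <= q ^ i * r' ^ i).
  { rewrite <- Rpow_mult_distr. apply pow_incr. pose proof (Cmod_ge_0 z).
    unfold q. split; [lra|]. replace (r / r' * r') with r by (field; unfold r'; lra). lra. }
  pose proof (Cmod_ge_0 (c i)). pose proof (pow_le q i ltac:(lra)).
  apply Rle_trans with (Cmod (c i) * (q ^ i * r' ^ i)); [apply Rmult_le_compat_l; auto|nra]. }
destruct (pow_lt_1_zero q ltac:(rewrite Rabs_pos_eq; lra) (eps * (1 - q) / B))
  as [N0 HN0]; [apply Rdiv_lt_0_compat; nra|].
exists N0. intros N HN z Hz.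
apply is_series_tail_le with (l := F z) (N := N); [apply Hser; lra|].
intro k. eapply Rle_trans; [apply (csum_tail_geom_le _ B q); [lra|intro i; apply (Hterm z i Hz)]|].
specialize (HN0 N HN). rewrite Rabs_pos_eq in HN0 by (apply pow_le; lra).
assert (HBq : B * q ^ N < eps * (1 - q)).
{ replace (eps * (1 - q)) with (B * (eps * (1 - q) / B)) by (field; lra).
  apply Rmult_lt_compat_l; lra. }
unfold Rdiv. apply Rmult_le_reg_r with (1 - q); [lra|]. rewrite Rmult_assoc, Rinv_l by lra. lra.
Qed.

Lemma le_lim_of_le_seq (g h : R -> R) (u : nat -> R) (l : R) :
  continuity_pt g l -> continuity_pt h l -> is_lim_seq u l ->
  (forall k, g (u k) <= h (u k)) -> g l <= h l.
Proof.
intros Hg Hh Hu Hle.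
exact (is_lim_seq_le _ _ _ _ Hle (is_lim_seq_continuous g u l Hg Hu)
         (is_lim_seq_continuous h u l Hh Hu)).
Qed.

Lemma is_lim_seq_half_pow : is_lim_seq (fun k => (1 / 2) ^ k) 0.
Proof. apply is_lim_seq_geom. rewrite Rabs_pos_eq; lra. Qed.

Lemma is_lim_seq_to_radius (R0 : R) : is_lim_seq (fun k => R0 * (1 - (1 / 2) ^ S k)) R0.
Proof.
replace (Finite R0) with (Finite (R0 * (1 - 0))) by (f_equal; ring).
apply is_lim_seq_mult'; [apply is_lim_seq_const|].
apply is_lim_seq_minus'; [apply is_lim_seq_const|].
apply (is_lim_seq_incr_1 (fun k => (1 / 2) ^ k)), is_lim_seq_half_pow.
Qed.

Section Wiener.

Variables (R0 : R) (c : nat -> C) (F : C -> C).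
Hypothesis Hser : forall z, Cmod z < R0 -> is_series (fun i => c i * Cpow z i)%C (F z).
Hypothesis Hbound : forall z, Cmod z < R0 -> Cmod (F z) <= 1.

Lemma wiener_sampled r n s : 0 < r < R0 -> (1 <= n)%nat ->
  Cmod (c O) ^ 2 + Cmod (c n + s * c O)%C ^ 2 * r ^ (2 * n) <= 1 + Cmod s ^ 2 * r ^ (2 * n).
Proof.
intros Hr Hn. set (Y := 1 + Cmod s ^ 2 * r ^ (2 * n)).
apply Rle_trans with ((1 + 0) ^ 2 * Y); [|right; ring].
apply (le_lim_of_le_seq (fun _ => Cmod (c O) ^ 2 + Cmod (c n + s * c O)%C ^ 2 * r ^ (2 * n))
         (fun e => (1 + e) ^ 2 * Y) (fun k => (1 / 2) ^ k) 0);
  [reg|reg|apply is_lim_seq_half_pow|].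
intro k. set (eps := (1 / 2) ^ k).
assert (He : 0 < eps) by (apply pow_lt; lra).
destruct (power_series_unif_cv R0 c F Hser r Hr eps He) as [N0 HN0].
set (M := Nat.max N0 n).
apply (sampled_coef_bound c r s n M eps); [lia|lra|].
intro j. set (z := (RtoC r * uroot (n + S M) 1 j)%C).
assert (Hz : Cmod z = r) by (unfold z; rewrite Cmod_mult, Cmod_R, Cmod_uroot, Rabs_pos_eq; lra).
specialize (HN0 (S M) ltac:(lia) z ltac:(lra)). specialize (Hbound z ltac:(lra)).
set (S0 := csum (fun i => c i * Cpow z i)%C (S M)) in *.
replace S0 with (F z - (F z - S0))%C by ring.
eapply Rle_trans; [apply Cmod_triangle|]. rewrite Cmod_opp. lra.
Qed.

(* Choosing [s = c_n conj(c_0) / (1 - |c_0|^2)] in [wiener_sampled] gives Wiener's bound. *)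
Lemma wiener_at_radius r n : 0 < r < R0 -> (1 <= n)%nat ->
  Cmod (c n) * r ^ n <= 1 - Cmod (c O) ^ 2.
Proof.
intros Hr Hn. set (A := Cmod (c O)). set (x := Cmod (c n) * r ^ n).
assert (Hx0 : 0 <= x) by (unfold x; apply Rmult_le_pos; [apply Cmod_ge_0|apply pow_le; lra]).
assert (Hrn : r ^ (2 * n) = (r ^ n) ^ 2) by (rewrite (Nat.mul_comm 2 n), pow_mult; auto).
assert (H0 : A ^ 2 + x ^ 2 <= 1).
{ pose proof (wiener_sampled r n 0%C Hr Hn) as H.
  replace (c n + 0 * c O)%C with (c n) in H by ring.
  rewrite Cmod_0, Hrn in H. unfold x. rewrite Rpow_mult_distr. fold A in H. lra. }
destruct (Req_dec (A ^ 2) 1) as [HA1|HA1].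
{ rewrite HA1. assert (x ^ 2 <= 0) by lra. nra. }
assert (HA2 : A ^ 2 < 1) by (pose proof (pow2_ge_0 x); lra).
set (lam := 1 / (1 - A ^ 2)).
assert (Hlam : lam * (1 - A ^ 2) = 1) by (unfold lam; field; lra).
assert (Hlp : 0 < lam) by (unfold lam; apply Rdiv_lt_0_compat; lra).
pose proof (wiener_sampled r n (RtoC lam * c n * Cconj (c O))%C Hr Hn) as H.
replace (c n + RtoC lam * c n * Cconj (c O) * c O)%C
  with (c n * RtoC (1 + lam * A ^ 2))%C in H.
2:{ replace (RtoC lam * c n * Cconj (c O) * c O)%C with (RtoC lam * c n * (c O * Cconj (c O)))%C
      by ring.
    rewrite <- Cmod2_conj. fold A. rewrite RtoC_plus, RtoC_mult. ring. }
rewrite !Cmod_mult, Cmod_conj, !Cmod_R, (Rabs_pos_eq lam), (Rabs_pos_eq (1 + lam * A ^ 2)) in H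
  by nra.
fold A in H. rewrite Hrn in H.
replace (1 + lam * A ^ 2) with lam in H by nra.
assert (H3 : (x * lam) ^ 2 * (1 - A ^ 2) <= 1 - A ^ 2).
{ unfold x. rewrite !Rpow_mult_distr in *. nra. }
assert (H4 : (x * lam) ^ 2 <= 1) by (apply Rmult_le_reg_r with (1 - A ^ 2); lra).
assert (H5 : x * lam <= 1) by nra.
apply Rmult_le_reg_r with lam; lra.
Qed.

Lemma wiener_coef_bound n : 0 < R0 -> (1 <= n)%nat -> Cmod (c n) * R0 ^ n <= 1 - Cmod (c O) ^ 2.
Proof.
intros HR Hn.
apply (le_lim_of_le_seq (fun r => Cmod (c n) * r ^ n) (fun _ => 1 - Cmod (c O) ^ 2)
         (fun k => R0 * (1 - (1 / 2) ^ S k)) R0); [reg|reg|apply is_lim_seq_to_radius|].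
intro k. apply wiener_at_radius; [|auto].
assert (0 < (1 / 2) ^ S k) by (apply pow_lt; lra).
assert ((1 / 2) ^ S k < 1) by (apply pow_lt_1_compat; lra || lia).
split; nra.
Qed.

End Wiener.

Lemma is_series_geom_majorant (v : nat -> R) (c q : R) : 0 <= q < 1 ->
  (forall n, 0 <= v n <= c * q ^ n) -> exists S : R, is_series v S /\ 0 <= S <= c / (1 - q).
Proof.
intros Hq Hv.
assert (Hgeom : is_series (fun n => c * q ^ n) (c / (1 - q)))
  by exact (is_series_scal_l c _ _ (is_series_geom q ltac:(rewrite Rabs_pos_eq; lra))).
assert (Hex : ex_series v).
{ apply (ex_series_le v (fun n => c * q ^ n)); [|eexists; exact Hgeom].
  intro n. change (Rabs (v n) <= c * q ^ n). rewrite Rabs_pos_eq; apply Hv. }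
exists (Series v). split; [apply Series_correct; auto|]. split.
- pose proof (Series_le (fun n => 0 * v n) v ltac:(intro n; specialize (Hv n); split; lra) Hex).
  rewrite Series_scal_l in H. lra.
- rewrite <- (is_series_unique _ _ Hgeom). apply Series_le; [auto|eexists; exact Hgeom].
Qed.

Lemma majorant_sums (A rho : R) (u : nat -> R) : 0 <= rho < 1 -> u O = A ->
  (forall n, 0 <= u (S n) <= (1 - A ^ 2) * rho * rho ^ n) ->
  exists S1 S2 : R, is_series u S1 /\ is_series (fun n => u (S n) ^ 2) S2 /\
    S1 <= A + (1 - A ^ 2) * (rho / (1 - rho)) /\
    0 <= S2 <= (1 - A ^ 2) ^ 2 * (rho ^ 2 / (1 - rho ^ 2)).
Proof.
intros Hrho HuA HuS.
destruct (is_series_geom_majorant (fun n => u (S n)) ((1 - A ^ 2) * rho) rho)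
  as [T1 [HT1 HT1le]]; [lra|exact HuS|].
destruct (is_series_geom_majorant (fun n => u (S n) ^ 2) ((1 - A ^ 2) ^ 2 * rho ^ 2) (rho ^ 2))
  as [T2 [HT2 HT2le]]; [nra| |].
{ intro n. specialize (HuS n).
  replace ((1 - A ^ 2) ^ 2 * rho ^ 2 * (rho ^ 2) ^ n) with (((1 - A ^ 2) * rho * rho ^ n) ^ 2)
    by (rewrite <- pow_mult, Nat.mul_comm, pow_mult; ring).
  split; [nra|apply pow_incr; lra]. }
exists (A + T1), T2. split; [|split; [exact HT2|unfold Rdiv in *; split; lra]].
apply is_series_decr_1. rewrite HuA.
change (plus (A + T1) (opp A)) with (A + T1 - A). replace (A + T1 - A) with T1 by ring.
exact HT1.
Qed.

Lemma majorant_le_1 (A rho S1 S2 : R) : 0 <= A <= 1 -> 0 <= rho <= 1 / 3 ->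
  S1 <= A + (1 - A ^ 2) * (rho / (1 - rho)) ->
  0 <= S2 <= (1 - A ^ 2) ^ 2 * (rho ^ 2 / (1 - rho ^ 2)) ->
  S1 + (1 / (1 + A) + rho / (1 - rho)) * S2 <= 1.
Proof.
intros HA Hr H1 H2.
set (x := rho / (1 - rho)). set (y := rho ^ 2 / (1 - rho ^ 2)). set (z := 1 / (1 + A)).
assert (Hx : 0 <= x <= 1 / 2).
{ unfold x. split; [apply Rdiv_le_0_compat; lra|].
  apply Rmult_le_reg_r with (1 - rho); [lra|]. field_simplify; lra. }
assert (Hy : 0 <= y <= 1 / 8).
{ unfold y. assert (rho ^ 2 <= 1 / 9) by nra. assert (0 <= rho ^ 2) by nra.
  split; [apply Rdiv_le_0_compat; lra|].
  apply Rmult_le_reg_r with (1 - rho ^ 2); [lra|]. field_simplify; lra. }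
assert (Hz : z * (1 + A) = 1) by (unfold z; field; lra).
assert (Hz0 : 0 < z) by (unfold z; apply Rdiv_lt_0_compat; lra).
fold x y z in H1, H2 |- *.
assert (HA2 : 0 <= 1 - A ^ 2) by nra.
assert (HS2 : S2 <= (1 - A ^ 2) ^ 2 / 8) by (pose proof (pow2_ge_0 (1 - A ^ 2)); nra).
assert (E1 : (z + x) * S2 <= (z + 1 / 2) * ((1 - A ^ 2) ^ 2 / 8))
  by (apply Rmult_le_compat; lra).
assert (E2 : z * (1 - A ^ 2) ^ 2 = (1 - A) ^ 2 * (1 + A)).
{ replace (z * (1 - A ^ 2) ^ 2) with ((z * (1 + A)) * ((1 - A) ^ 2 * (1 + A))) by ring.
  rewrite Hz. ring. }
assert (E3 : (1 - A ^ 2) * x <= (1 - A ^ 2) / 2) by nra.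
(* In terms of [t = 1 - A] the left side equals [1 + t^3 (t - 6) / 16]. *)
assert (Fin : A + (1 - A ^ 2) / 2 + (z + 1 / 2) * ((1 - A ^ 2) ^ 2 / 8) <= 1).
{ replace ((z + 1 / 2) * ((1 - A ^ 2) ^ 2 / 8))
    with ((z * (1 - A ^ 2) ^ 2 + (1 - A ^ 2) ^ 2 / 2) / 8) by field.
  rewrite E2. set (t := 1 - A). replace A with (1 - t) by (unfold t; ring).
  assert (0 <= t <= 1) by (unfold t; lra). nra. }
lra.
Qed.

Lemma lhs_is_of_series (g rho : R) (a : nat -> C) (S1 S2 : R) : g <> 1 ->
  is_series (fun n => Cmod (a n) / (1 - g) ^ n * rho ^ n) S1 ->
  is_series (fun n => (Cmod (a (S n)) / (1 - g) ^ S n * rho ^ S n) ^ 2) S2 ->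
  lhs_is g rho a (S1 + (1 / (1 + Cmod (a O)) + rho / (1 - rho)) * S2).
Proof.
intros Hg H1 H2. exists S1, S2. split; [exact H1|]. split; [|reflexivity].
eapply is_series_ext; [|exact H2]. intro n.
match goal with |- ?x = ?y => change (@eq R x y) end.
rewrite (Nat.mul_comm 2 (S n)), !pow_mult. field. apply pow_nonzero. lra.
Qed.

Lemma admissible_centered (g : R) (f : C -> C) (a : nat -> C) : admissible g f a ->
  (forall z, Cmod z < rad g -> is_series (fun n => a n * Cpow z n)%C (f (z + cen g)%C)) /\
  (forall z, Cmod z < rad g -> Cmod (f (z + cen g)%C) <= 1).
Proof.
intros [Hser Hb].
assert (HO : forall z, Cmod z < rad g -> Omega g (z + cen g)%C).
{ intros z Hz. unfold Omega. replace (z + cen g - cen g)%C with z by ring. exact Hz. }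
split; intros z Hz.
- eapply is_series_ext; [|exact (Hser _ (HO z Hz))]. intro n.
  replace (z + cen g - cen g)%C with z by ring. reflexivity.
- exact (Hb _ (HO z Hz)).
Qed.

Lemma lhs_le_1 (g : R) (f : C -> C) (a : nat -> C) (rho : R) :
  0 <= g < 1 -> admissible g f a -> 0 <= rho <= 1 / 3 -> exists L, lhs_is g rho a L /\ L <= 1.
Proof.
intros Hg Hadm Hrho.
destruct (admissible_centered g f a Hadm) as [Hser Hb].
assert (HR : 0 < rad g) by (unfold rad; apply Rdiv_lt_0_compat; lra).
pose proof (fun n => wiener_coef_bound (rad g) a _ Hser Hb n HR) as HW.
set (A := Cmod (a O)) in *.
set (u n := Cmod (a n) / (1 - g) ^ n * rho ^ n).
assert (Hu : forall n, u n = Cmod (a n) * rad g ^ n * rho ^ n).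
{ intro n. unfold u, rad, Rdiv. rewrite Rmult_1_l, pow_inv. reflexivity. }
assert (HuS : forall n, 0 <= u (S n) <= (1 - A ^ 2) * rho * rho ^ n).
{ intro n. rewrite Hu. specialize (HW (S n) ltac:(lia)).
  assert (0 <= Cmod (a (S n)) * rad g ^ S n)
    by (apply Rmult_le_pos; [apply Cmod_ge_0|apply pow_le; lra]).
  assert (0 <= rho ^ S n) by (apply pow_le; lra).
  replace ((1 - A ^ 2) * rho * rho ^ n) with ((1 - A ^ 2) * rho ^ S n) by (simpl; ring).
  split; [nra|]. apply Rmult_le_compat_r; lra. }
assert (HuA : u O = A) by (unfold u, A; simpl; field).
assert (HA : 0 <= A <= 1).
{ pose proof (HW 1%nat ltac:(lia)).
  assert (0 <= Cmod (a 1%nat) * rad g ^ 1)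
    by (apply Rmult_le_pos; [apply Cmod_ge_0|apply pow_le; lra]).
  assert (0 <= A) by apply Cmod_ge_0. split; nra. }
destruct (majorant_sums A rho u ltac:(lra) HuA HuS) as [S1 [S2 [HS1 [HS2 [HS1le HS2le]]]]].
exists (S1 + (1 / (1 + A) + rho / (1 - rho)) * S2). split.
- apply lhs_is_of_series; [lra|exact HS1|exact HS2].
- apply majorant_le_1; auto.
Qed.

Lemma is_series_Cgeom (q : C) : Cmod q < 1 -> is_series (fun k => Cpow q k) (/ (1 - q))%C.
Proof.
intros Hq. apply filterlim_locally_ball_norm. intros [eps He]. simpl.
assert (Hq1 : (1 - q)%C <> 0%C).
{ intro Z. replace q with (1 - (1 - q))%C in Hq by ring. rewrite Z in Hq.
  replace (1 - 0)%C with (RtoC 1) in Hq by ring. rewrite Cmod_1 in Hq. lra. }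
assert (Hm : 0 < Cmod (1 - q)) by (apply Cmod_gt_0; auto).
destruct (pow_lt_1_zero (Cmod q) ltac:(rewrite Rabs_pos_eq; [lra|apply Cmod_ge_0])
            (eps * Cmod (1 - q)) ltac:(nra)) as [N HN].
exists N. intros n Hn. unfold ball_norm.
change (Cmod (sum_n (fun k => Cpow q k) n - / (1 - q)) < eps).
rewrite sum_n_csum.
assert (E : (csum (fun j => Cpow q j) (S n) - / (1 - q))%C = (- Cpow q (S n) / (1 - q))%C).
{ assert (G := csum_geom q (S n)).
  replace (csum (fun j => Cpow q j) (S n))
    with (- (csum (fun j => Cpow q j) (S n) * (q - 1)) / (1 - q))%C by (field; auto).
  rewrite G. field. auto. }
rewrite E, Cmod_div, Cmod_opp, Cmod_pow by auto.
specialize (HN (S n) ltac:(lia)). rewrite Rabs_pos_eq in HN by (apply pow_le, Cmod_ge_0).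
apply Rmult_lt_reg_r with (Cmod (1 - q)); auto.
unfold Rdiv. rewrite Rmult_assoc, Rinv_l by lra. lra.
Qed.

Definition disc_aut (al : R) (z : C) : C := ((RtoC al - z) / (1 - RtoC al * z))%C.

Definition disc_aut_coef (al : R) (n : nat) : R :=
  match n with O => al | S k => - (1 - al ^ 2) * al ^ k end.

Lemma disc_aut_den_neq0 al z : 0 <= al < 1 -> Cmod z < 1 -> (1 - RtoC al * z)%C <> 0%C.
Proof.
intros Ha Hz Z.
assert (H : (RtoC al * z)%C = RtoC 1).
{ replace (RtoC al * z)%C with (1 - (1 - RtoC al * z))%C by ring. rewrite Z. ring. }
apply (f_equal Cmod) in H. rewrite Cmod_mult, Cmod_R, Cmod_1, Rabs_pos_eq in H by lra.
pose proof (Cmod_ge_0 z). nra.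
Qed.

Lemma is_series_disc_aut al z : 0 <= al < 1 -> Cmod z < 1 ->
  is_series (fun n => RtoC (disc_aut_coef al n) * Cpow z n)%C (disc_aut al z).
Proof.
intros Ha Hz. pose proof (disc_aut_den_neq0 al z Ha Hz) as Hd.
apply is_series_decr_1.
assert (Hq : Cmod (RtoC al * z) < 1).
{ rewrite Cmod_mult, Cmod_R, Rabs_pos_eq by lra. pose proof (Cmod_ge_0 z). nra. }
pose proof (is_series_scal (RtoC (- (1 - al ^ 2)) * z)%C _ _ (is_series_Cgeom _ Hq)) as H.
change (is_series (fun k => RtoC (disc_aut_coef al (S k)) * Cpow z (S k))%C
          (disc_aut al z + - (RtoC al * 1))%C).
replace (disc_aut al z + - (RtoC al * 1))%C
  with ((RtoC (- (1 - al ^ 2)) * z) * / (1 - RtoC al * z))%C.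
2:{ unfold disc_aut. rewrite RtoC_opp, RtoC_minus, RtoC_pow. field. auto. }
eapply is_series_ext; [|exact H]. intro k.
change ((RtoC (- (1 - al ^ 2)) * z * Cpow (RtoC al * z) k)%C
        = (RtoC (- (1 - al ^ 2) * al ^ k) * (z * Cpow z k))%C).
rewrite Cpow_mult_l, RtoC_mult, RtoC_pow. ring.
Qed.

(* [|1 - al z|^2 - |al - z|^2 = (1 - al^2) (1 - |z|^2)] *)
Lemma Cmod_disc_aut_le_1 al z : 0 <= al < 1 -> Cmod z < 1 -> Cmod (disc_aut al z) <= 1.
Proof.
intros Ha Hz. pose proof (disc_aut_den_neq0 al z Ha Hz) as Hd.
unfold disc_aut. rewrite Cmod_div by auto.
assert (Hm : 0 < Cmod (1 - RtoC al * z)) by (apply Cmod_gt_0; auto).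
apply Rmult_le_reg_r with (Cmod (1 - RtoC al * z)); auto.
unfold Rdiv. rewrite Rmult_assoc, Rinv_l, Rmult_1_l, Rmult_1_r by lra.
destruct z as [x y]. unfold Cmod in *. apply sqrt_le_1_alt. simpl in *.
assert (Hxy : x * (x * 1) + y * (y * 1) < 1).
{ destruct (Rlt_or_le (x * (x * 1) + y * (y * 1)) 1) as [|H]; auto.
  apply sqrt_le_1_alt in H. rewrite sqrt_1 in H. lra. }
assert (0 <= (1 - al * al) * (1 - x * x - y * y)) by (apply Rmult_le_pos; nra). nra.
Qed.

Lemma admissible_disc_aut (g al : R) : 0 <= g < 1 -> 0 <= al < 1 ->
  admissible g (fun z => disc_aut al (RtoC (1 - g) * (z - cen g))%C)
               (fun n => RtoC (disc_aut_coef al n * (1 - g) ^ n)).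
Proof.
intros Hg Hal.
assert (Hz : forall z, Omega g z -> Cmod (RtoC (1 - g) * (z - cen g))%C < 1).
{ intros z Hz. unfold Omega, rad in Hz. rewrite Cmod_mult, Cmod_R, Rabs_pos_eq by lra.
  apply Rmult_lt_reg_r with (1 / (1 - g)); [apply Rdiv_lt_0_compat; lra|].
  replace ((1 - g) * Cmod (z - cen g) * (1 / (1 - g))) with (Cmod (z - cen g)) by (field; lra).
  lra. }
split; intros z Hz'.
- eapply is_series_ext; [|apply (is_series_disc_aut al _ Hal (Hz z Hz'))].
  intro n. change ((RtoC (disc_aut_coef al n) * Cpow (RtoC (1 - g) * (z - cen g)) n)%C
                   = (RtoC (disc_aut_coef al n * (1 - g) ^ n) * Cpow (z - cen g) n)%C).
  rewrite RtoC_mult, Cpow_mult_l, <- RtoC_pow. ring.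
- apply Cmod_disc_aut_le_1; auto.
Qed.

Lemma disc_aut_sums (al rho : R) : 0 <= al < 1 -> 0 <= rho < 1 ->
  is_series (fun n => Rabs (disc_aut_coef al n) * rho ^ n)
            (al + (1 - al ^ 2) * rho / (1 - al * rho)) /\
  is_series (fun n => (Rabs (disc_aut_coef al (S n)) * rho ^ S n) ^ 2)
            (((1 - al ^ 2) * rho) ^ 2 / (1 - (al * rho) ^ 2)).
Proof.
intros Hal Hrho.
assert (HuS : forall k, Rabs (disc_aut_coef al (S k)) * rho ^ S k
                        = (1 - al ^ 2) * rho * (al * rho) ^ k).
{ intro k. simpl disc_aut_coef. rewrite Rabs_mult, Rabs_Ropp, !Rabs_pos_eq, Rpow_mult_distr;
    [simpl; ring|apply pow_le; lra|nra]. }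
assert (Halr0 : 0 <= al * rho < 1) by nra.
assert (Halr : Rabs (al * rho) < 1) by (rewrite Rabs_pos_eq; lra).
assert (Halr2 : Rabs ((al * rho) ^ 2) < 1) by (rewrite Rabs_pos_eq; simpl; nra).
split.
- set (T := (1 - al ^ 2) * rho / (1 - al * rho)).
  apply is_series_decr_1.
  change (plus (al + T) (opp (Rabs (disc_aut_coef al O) * rho ^ 0))) with (al + T - Rabs al * 1).
  rewrite Rabs_pos_eq by lra. replace (al + T - al * 1) with T by ring.
  eapply is_series_ext;
    [|exact (is_series_scal_l ((1 - al ^ 2) * rho) _ _ (is_series_geom _ Halr))].
  intro k. rewrite HuS. reflexivity.
- eapply is_series_ext;
    [|exact (is_series_scal_l (((1 - al ^ 2) * rho) ^ 2) _ _ (is_series_geom _ Halr2))].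
  intro k. rewrite HuS.
  change (((1 - al ^ 2) * rho) ^ 2 * ((al * rho) ^ 2) ^ k
          = ((1 - al ^ 2) * rho * (al * rho) ^ k) ^ 2).
  rewrite <- pow_mult, Nat.mul_comm, pow_mult. ring.
Qed.

Lemma disc_aut_first_sum_gt_1 (al rho : R) : 0 < al < 1 -> 0 < rho < 1 ->
  rho * (1 + 2 * al) > 1 -> al + (1 - al ^ 2) * rho / (1 - al * rho) > 1.
Proof.
intros Hal Hrho Hkey. assert (0 < 1 - al * rho) by nra.
apply Rlt_0_minus.
replace (al + (1 - al ^ 2) * rho / (1 - al * rho) - 1)
  with ((1 - al) * (rho * (1 + 2 * al) - 1) / (1 - al * rho)) by (field; lra).
apply Rdiv_lt_0_compat; nra.
Qed.

(* [al] is the midpoint of [(1 - rho) / (2 rho)] and [1], so that [rho (1 + 2 al) > 1]. *)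
Lemma lhs_gt_1_disc_aut (g rho : R) : 0 <= g < 1 -> 1 / 3 < rho < 1 ->
  exists (f : C -> C) (a : nat -> C), admissible g f a /\ exists L, lhs_is g rho a L /\ L > 1.
Proof.
intros Hg Hr.
set (al := (1 + rho) / (4 * rho)).
assert (Hal : 0 < al < 1).
{ unfold al. split; [apply Rdiv_lt_0_compat; lra|].
  apply Rmult_lt_reg_r with (4 * rho); [lra|]. field_simplify; lra. }
assert (Hkey : rho * (1 + 2 * al) > 1) by (replace (rho * (1 + 2 * al)) with ((1 + 3 * rho) / 2)
  by (unfold al; field; lra); lra).
set (a n := RtoC (disc_aut_coef al n * (1 - g) ^ n)).
exists (fun z => disc_aut al (RtoC (1 - g) * (z - cen g))%C), a.
split; [apply admissible_disc_aut; lra|].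
assert (Hu : forall n, Cmod (a n) / (1 - g) ^ n * rho ^ n = Rabs (disc_aut_coef al n) * rho ^ n).
{ intro n. unfold a. rewrite Cmod_R, Rabs_mult, (Rabs_pos_eq ((1 - g) ^ n)) by (apply pow_le; lra).
  field. apply pow_nonzero. lra. }
destruct (disc_aut_sums al rho ltac:(lra) ltac:(lra)) as [HS1 HS2].
set (S1 := al + (1 - al ^ 2) * rho / (1 - al * rho)) in HS1.
set (S2 := ((1 - al ^ 2) * rho) ^ 2 / (1 - (al * rho) ^ 2)) in HS2.
exists (S1 + (1 / (1 + Cmod (a O)) + rho / (1 - rho)) * S2). split.
- apply lhs_is_of_series; [lra| |].
  + eapply is_series_ext; [|exact HS1]. intro n. symmetry. apply Hu.
  + eapply is_series_ext; [|exact HS2]. intro n. rewrite Hu. reflexivity.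
- assert (HS1g : S1 > 1) by (apply disc_aut_first_sum_gt_1; lra).
  assert (HS2p : 0 <= S2).
  { unfold S2. apply Rdiv_le_0_compat; [apply pow2_ge_0|].
    assert (0 <= al * rho < 1) by nra. nra. }
  assert (0 <= 1 / (1 + Cmod (a O)) + rho / (1 - rho)).
  { pose proof (Cmod_ge_0 (a O)).
    assert (0 < 1 / (1 + Cmod (a O))) by (apply Rdiv_lt_0_compat; lra).
    assert (0 < rho / (1 - rho)) by (apply Rdiv_lt_0_compat; lra). lra. }
  nra.
Qed.

Theorem theorem2p1 :
  forall g : R, 0 <= g < 1 ->
  (forall (f : C -> C) (a : nat -> C), admissible g f a ->
     forall rho : R, 0 <= rho <= 1 / 3 ->
       exists L, lhs_is g rho a L /\ L <= 1)
  /\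
  (forall rho : R, 1 / 3 < rho < 1 ->
     exists (f : C -> C) (a : nat -> C), admissible g f a /\
       exists L, lhs_is g rho a L /\ L > 1).
Proof.
intros g Hg. split.
- intros f a Ha rho Hr. exact (lhs_le_1 g f a rho Hg Ha Hr).
- intros rho Hr. exact (lhs_gt_1_disc_aut g rho Hg Hr).
Qed.
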